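(* Let $G$ be a graph of order $n$ with minimum degree $\delta(G)\geq\frac{n-1}{2}$. Then $prc(G)=\chi'(G)$.
   Context: A path in an edge-coloured graph is a rainbow path if its edges receive pairwise distinct colours. The proper rainbow connection number $prc(G)$ of a connected graph is the minimum number of colours in a proper edge-colouring (adjacent edges get distinct colours) such that every two distinct vertices are joined by a rainbow path. $\chi'(G)$ is the chromatic index. *)

From mathcomp Require Import all_boot.
Set Implicit Arguments. Unset Strict Implicit. Unset Printing Implicit Defensive.

Definition simple_graph (T : finType) (e : rel T) : Prop :=
  irreflexive e /\ symmetric e.

Definition deg (T : finType) (e : rel T) (v : T) : nat := #|[set u | e v u]|.

(* An edge colouring is a function [c : T -> T -> nat]; only its values on
   edges matter, and it must be symmetric on edges (c x y is the colour of the
   edge xy). *)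
Definition edge_colouring (T : finType) (e : rel T) (k : nat) (c : T -> T -> nat)
  : Prop :=
  forall x y, e x y -> c x y = c y x /\ c x y < k.

Definition proper_colouring (T : finType) (e : rel T) (k : nat) (c : T -> T -> nat)
  : Prop :=
  edge_colouring e k c /\
  forall x y z, e x y -> e x z -> y != z -> c x y != c x z.

Definition rainbow_path (T : finType) (e : rel T) (c : T -> T -> nat)
  (x y : T) (p : seq T) : Prop :=
  path e x p /\ uniq (x :: p) /\ last x p = y /\ uniq (pairmap c x p).

Definition rainbow_connected (T : finType) (e : rel T) (c : T -> T -> nat) : Prop :=
  forall x y, x != y -> exists p, rainbow_path e c x y p.

Definition is_chromatic_index (T : finType) (e : rel T) (k : nat) : Prop :=
  (exists c, proper_colouring e k c) /\
  forall k' c, proper_colouring e k' c -> k <= k'.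

Definition is_prc (T : finType) (e : rel T) (k : nat) : Prop :=
  (exists c, proper_colouring e k c /\ rainbow_connected e c) /\
  forall k' c, proper_colouring e k' c -> rainbow_connected e c -> k <= k'.

(* With minimum degree at least (n-1)/2, two non-adjacent vertices have
   neighbourhoods too large to be disjoint inside the remaining n-2 vertices,
   so the graph has diameter at most 2.  A path with at most two edges is
   rainbow under every proper colouring, hence every proper colouring is
   rainbow connected and prc(G) = chi'(G). *)
From mathcomp Require Import all_boot.
From mathcomp Require Import zify.

Set Implicit Arguments.
Unset Strict Implicit.
Unset Printing Implicit Defensive.

Definition diameter_le2 (T : finType) (e : rel T) : Prop :=
  forall x y, x != y -> ~~ e x y -> exists2 w, e x w & e w y.

Section SimpleGraph.

Variables (T : finType) (e : rel T).
Hypothesis simple_e : simple_graph e.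

Let irr_e : irreflexive e := simple_e.1.
Let sym_e : symmetric e := simple_e.2.

Lemma neq_of_edge x y : e x y -> x != y.
Proof. by apply: contraTneq => ->; rewrite irr_e. Qed.

Lemma min_degree_diameter_le2 :
  (forall v : T, #|T| <= 2 * deg e v + 1) -> diameter_le2 e.
Proof.
move=> hdeg x y nxy nexy.
set A := [set u | e x u]; set B := [set u | e y u].
case: (set_0Vmem (A :&: B)) => [AB0 | [w]]; last first.
  by rewrite !inE => /andP[exw eyw]; exists w; rewrite // sym_e.
have cardAB : #|A :|: B| = #|A| + #|B| by rewrite cardsU AB0 cards0 subn0.
have subAB : A :|: B \subset ~: [set x; y].
  apply/subsetP=> u; rewrite !inE negb_or.
  by case/orP=> eu; apply/andP; split; apply: contraTneq eu => ->;
    rewrite ?irr_e // sym_e.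
have := subset_leq_card subAB.
rewrite cardAB; have := cardsC [set x; y]; rewrite cards2 nxy.
have := hdeg x; have := hdeg y; rewrite /deg -/A -/B.
lia.
Qed.

Lemma rainbow_path_edge c x y : e x y -> rainbow_path e c x y [:: y].
Proof. by move=> exy; rewrite /rainbow_path /= exy inE neq_of_edge. Qed.

Lemma rainbow_path2 k c x w y :
  proper_colouring e k c -> x != y -> e x w -> e w y ->
  rainbow_path e c x y [:: w; y].
Proof.
move=> [col proper] nxy exw ewy.
rewrite /rainbow_path /= exw ewy !inE negb_or nxy (neq_of_edge exw).
rewrite (neq_of_edge ewy) andbT; do !split=> //.
by rewrite (col x w exw).1 proper // sym_e.
Qed.

Lemma proper_rainbow_connected k c :
  diameter_le2 e -> proper_colouring e k c -> rainbow_connected e c.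
Proof.
move=> diam pc x y nxy; case exy: (e x y).
  by exists [:: y]; exact: rainbow_path_edge.
have [w exw ewy] := diam x y nxy (negbT exy).
by exists [:: w; y]; exact: rainbow_path2 pc nxy exw ewy.
Qed.

Lemma prc_eq_chromatic_index k :
  diameter_le2 e -> is_chromatic_index e k -> is_prc e k.
Proof.
move=> diam [[c pc] kmin]; split.
  by exists c; split=> //; exact: proper_rainbow_connected pc.
by move=> k' c' pc' _; exact: kmin pc'.
Qed.

End SimpleGraph.

Theorem proposition5p8 (T : finType) (e : rel T) :
  simple_graph e ->
  (forall v : T, #|T| <= 2 * deg e v + 1) ->
  forall k : nat, is_chromatic_index e k -> is_prc e k.
Proof.
move=> simple_e hdeg k.
exact/prc_eq_chromatic_index/min_degree_diameter_le2.
Qed.
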